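(* Let $D$ be an oriented virtual singular link diagram, $S$ a state of $D$, and $S'$ the state of $D$ obtained from $S$ by changing the resolution at exactly one classical or singular crossing of $D$. Write $\max_A(\overline{R}(S))=2a(S)+4b(S)+2(\alpha(S)+\|S\|)+4\beta(S)$. (1) If $\|S'\|\neq\|S\|$, then $i(S')=i(S)$ and $\max_A(\overline{R}(S'))\equiv\max_A(\overline{R}(S))\pmod 4$. (2) If $\|S'\|=\|S\|$, then $i(S')=-i(S)$ and $\max_A(\overline{R}(S'))\equiv\max_A(\overline{R}(S))+2\pmod 4$.
   Context: An oriented virtual singular link diagram is a generic immersion of finitely many oriented circles into $\mathbb{R}^2$ with finitely many transverse double points, each decorated as a classical crossing (with over/under information and the usual sign $\pm1$), a singular crossing, or a virtual crossing. At a classical or singular crossing, the oriented resolution replaces it by two disjoint arcs respecting orientation; the disoriented resolution replaces it by one arc joining the two incoming ends with a sink bivalent vertex (both adjacent edges oriented toward it) and one arc joining the two outgoing ends with a source bivalent vertex. Virtual crossings are kept. A state $S$ of $D$ is a choice of resolution at every classical and singular crossing; it is a collection of immersed closed curves (all intersections virtual) with bivalent vertices, edge orientations alternating. $\|S\|$ = number of closed curves of $S$; $a(S)$ = #(negative classical crossings with oriented resolution) $-$ #(positive classical crossings with oriented resolution); $b(S)$ the same for disoriented resolutions; $\alpha(S),\beta(S)$ = numbers of singular crossings with oriented, resp. disoriented, resolution. $\overline{R}(S)=A^{2a(S)+4b(S)}(-A^2-A^{-2})^{\alpha(S)+\|S\|}(-A^4-A^{-4})^{\beta(S)}h^{\frac{1-i(S)}{2}}$,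 where the parity $i(S)\in\{\pm1\}$ is defined as follows: an edge of $S$ is an arc between consecutive bivalent vertices (a closed curve without vertices is one edge); a weight map is $\tau:E(S)\to\{\pm1\}$ with different values on edges sharing a vertex; $i(S)=\prod_v\tau(e_v)\tau(e_v')$ over all virtual crossings $v$ of $S$, with $e_v,e_v'$ the edges meeting at $v$ (possibly equal); this is independent of $\tau$. *)

From HB Require Import structures.
From mathcomp Require Import all_boot all_order all_algebra.
Set Implicit Arguments. Unset Strict Implicit. Unset Printing Implicit Defensive.
Import Order.TTheory GRing.Theory Num.Theory.

(* Crossings.  Every double point c of the immersion has two strands, numbered *)
(* 1 (false) and 2 (true), each passing through c with an incoming and an     *)
(* outgoing half-edge.  Strand numbering convention: going counterclockwise   *)
(* around c the four half-edges are  in1, in2, out1, out2  (any transverse    *)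
(* crossing of two oriented strands admits exactly one such labelling).       *)
(* A classical crossing records whether strand 1 is the over-strand; with the *)
(* convention above, strand 1 over  <=>  the crossing is positive.            *)
Inductive ckind := Classical of bool | Singular | Virtual.

Definition is_virtual k := if k is Virtual then true else false.
Definition is_singular k := if k is Singular then true else false.
Definition is_pos k := if k is Classical o then o else false.
Definition is_neg k := if k is Classical o then ~~ o else false.

(*  - link c s : the (crossing, strand) whose incoming half-edge is reached by *)
(*    following the diagram from the outgoing half-edge of strand s at c;     *)
(*    this is a bijection on C * bool (injective on a finite type);           *)
(*  - ncirc : number of closed components with no double points.             *)
Record diagram (C : finType) := Diagram {
  kind : C -> ckind;
  link : C -> bool -> C * bool;
  link_inj : injective (fun p : C * bool => link p.1 p.2);
  ncirc : nat }.

(* Half-edges (darts): (c, s, o) = strand s at crossing c, outgoing iff o.   *)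
Definition dart (C : finType) := (C * bool * bool)%type.

Section Defs.
Variables (C : finType) (D : diagram C).

Definition ext_rel (d e : dart C) : bool :=
  let: (c, s, o) := d in let: (c', s', o') := e in
  (o && ~~ o' && (link D c s == (c', s'))) ||
  (~~ o && o' && (link D c' s' == (c, s))).

Definition nclasses (T : finType) (r : rel T) : nat :=
  #|[set [set y | connect r x y] | x : T]|.

(* counterclockwise rotation at a crossing: in1 -> in2 -> out1 -> out2 -> in1 *)
Definition rot (d : dart C) : dart C :=
  let: (c, s, o) := d in (c, ~~ s, s (+) o).

Definition face_rel (d d' : dart C) : bool :=
  [exists e : dart C, ext_rel d e && (d' == rot e)].

Definition comp_rel (d d' : dart C) : bool :=
  ext_rel d d' || (d.1.1 == d'.1.1).

(* Euler's formula V - E + F = 2 (#components) with V = #|C|, E = 2 #|C|;   *)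
(* this is exactly the condition that the 4-valent graph with the rotation  *)
(* system given by the crossings is a disjoint union of plane graphs, i.e.   *)
(* that D comes from a generic immersion of circles in R^2.                 *)
Definition planar : Prop :=
  nclasses face_rel = (#|C| + 2 * nclasses comp_rel)%N.

(* A state: res c = true  <-> oriented resolution at c,                       *)
(*                  false <-> disoriented resolution at c                     *)
(* (ignored at virtual crossings).                                           *)
Variable res : C -> bool.

(* the half-edge at the same crossing to which d is joined inside the state *)
Definition inner (d : dart C) : dart C :=
  let: (c, s, o) := d in
  if is_virtual (kind D c) then (c, s, ~~ o)          (* in1-out1, in2-out2 *)
  else if res c then (c, ~~ s, ~~ o)                   (* oriented: in1-out2, in2-out1 *)
  else (c, ~~ s, o).                                   (* disoriented: in1-in2 (sink), out1-out2 (source) *)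

(* d is joined to inner d through a bivalent vertex *)
Definition at_vertex (d : dart C) : bool :=
  ~~ is_virtual (kind D d.1.1) && ~~ res d.1.1.

Definition curve_rel (d e : dart C) : bool := ext_rel d e || (e == inner d).

(* ||S|| : number of closed curves of S *)
Definition nS : nat := (ncirc D + nclasses curve_rel)%N.

(* edges of S: classes of darts joined without passing a bivalent vertex *)
Definition arc_rel (d e : dart C) : bool :=
  ext_rel d e || ((e == inner d) && ~~ at_vertex d).

(* weight maps, seen on darts (constant on each edge of S); the closed curves *)
(* without double points are edges too but play no role in i(S).            *)
Definition weightb (tau : {ffun dart C -> bool}) : bool :=
  [forall d, forall e, arc_rel d e ==> (tau d == tau e)] &&
  [forall d, at_vertex d ==> (tau d != tau (inner d))].

Definition sgb (b : bool) : int := if b then 1%R else (-1)%R.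

(* i(S) = prod over virtual crossings v of tau(e_v) tau(e_v'), computed for   *)
(* a chosen weight map (independent of the choice).                          *)
Definition ipar : int :=
  if [pick tau | weightb tau] is Some tau then
    (\prod_(c | is_virtual (kind D c))
        (sgb (tau (c, false, false)) * sgb (tau (c, true, false))))%R
  else 1%R.

Definition a_S : int :=
  (#|[set c | is_neg (kind D c) && res c]|%:Z - #|[set c | is_pos (kind D c) && res c]|%:Z)%R.
Definition b_S : int :=
  (#|[set c | is_neg (kind D c) && ~~ res c]|%:Z - #|[set c | is_pos (kind D c) && ~~ res c]|%:Z)%R.
Definition alpha_S : nat := #|[set c | is_singular (kind D c) && res c]|.
Definition beta_S : nat := #|[set c | is_singular (kind D c) && ~~ res c]|.

Definition maxA : int :=
  (2 * a_S + 4 * b_S + 2 * (alpha_S + nS)%:Z + 4 * beta_S%:Z)%R.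

End Defs.

Definition flip_at (C : finType) (res : C -> bool) (c0 : C) : C -> bool :=
  fun c => if c == c0 then ~~ res c else res c.

(* Changing the resolution at the non-virtual crossing [c0] only changes how the four
   half-edges at [c0] are joined.  Following the state from a half-edge at [c0] until
   it first comes back to [c0] pairs these half-edges in one of three ways, and
   comparing that pairing with the oriented and the disoriented joins gives
   ||S'|| = ||S|| - 1, ||S|| + 1 or ||S||; max_A changes by 2 (||S'|| - ||S||) +- 2.
   A weight map of S' is one of S, possibly flipped along the arc of S that leaves
   [c0] and comes back.  Flipping a weight map along a union of closed curves
   multiplies the product over virtual crossings by -1 at each virtual crossing that
   the curves pass along exactly one strand.  Two closed curves in the plane cross an
   even number of times, so the same sign is the product over the classical and
   singular crossings instead; for the arc this leaves only [c0], which counts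
   exactly when the arc goes straight through [c0], i.e. when ||S'|| = ||S||.  With
   no exceptional crossing, the same argument shows that i(S) does not depend on the
   weight map.  Planarity enters through Euler's formula, which makes every cycle
   mod 2 of the 4-valent graph the coboundary of a 2-colouring of the faces. *)

From Pilot Require Import Defs.
From HB Require Import structures.
From mathcomp Require Import all_boot all_order all_algebra zify.
From Stdlib Require Import FunctionalExtensionality.
Set Implicit Arguments. Unset Strict Implicit. Unset Printing Implicit Defensive.
Import GRing.Theory.

(* Packaged once as a [fieldType]: unifying the structures of separate copies of *)
(* ['F_2] is extremely slow.                                                       *)
Definition F2 : fieldType := 'F_2.

Section DiagramEdges.
Variables (C : finType) (D : diagram C).

Definition linkp (p : C * bool) : C * bool := link D p.1 p.2.

Lemma linkp_inj : injective linkp.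
Proof. by move=> p q; apply: (@link_inj _ D p q). Qed.

Definition unlinkp : C * bool -> C * bool := invF linkp_inj.
Lemma linkpK : cancel linkp unlinkp. Proof. exact: invF_f. Qed.
Lemma unlinkpK : cancel unlinkp linkp. Proof. exact: f_invF. Qed.

Definition mate (d : dart C) : dart C :=
  let: (c, s, o) := d in if o then (linkp (c, s), false) else (unlinkp (c, s), true).

Lemma mateK : involutive mate.
Proof.
move=> [[c s] []] /=.
- by case E: (linkp (c, s)) => [c' s'] /=; rewrite -E linkpK.
- by case E: (unlinkp (c, s)) => [c' s'] /=; rewrite -E unlinkpK.
Qed.

Lemma mate_inj : injective mate. Proof. exact: inv_inj mateK. Qed.

Lemma mate_out d : (mate d).2 = ~~ d.2.
Proof. by case: d => [[c s] []]. Qed.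

Lemma mate_neq d : mate d != d.
Proof. by apply/eqP => /(congr1 snd); rewrite mate_out; case: d.2. Qed.

Lemma ext_relE d e : ext_rel D d e = (e == mate d).
Proof.
case: d e => [[c s] o] [[c' s'] o'] /=.
case: o o' => [] [] /=; rewrite ?orbF ?andbF /= ?xpair_eqE ?andbT ?andbF //.
apply/eqP/eqP => E.
- by rewrite -[(c', s')]linkpK /linkp /= E.
- by rewrite -[link D c' s']/(linkp (c', s')) E unlinkpK.
Qed.

Lemma ext_rel_sym : symmetric (ext_rel D).
Proof. by move=> d e; rewrite !ext_relE; apply/eqP/eqP => ->; rewrite mateK. Qed.

End DiagramEdges.

Section ClassFunctions.
Variables (T : finType) (r : rel T).
Hypothesis r_sym : connect_sym r.

Definition class_type := {X : {set T} | X \in [set [set y | connect r x y] | x : T]}.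

Lemma class_in_classes x :
  [set y | connect r x y] \in [set [set y | connect r x y] | x : T].
Proof. by apply/imsetP; exists x. Qed.

Definition class_of x : class_type := exist _ [set y | connect r x y] (class_in_classes x).

Lemma class_of_connect x y : connect r x y -> class_of x = class_of y.
Proof. by move=> xy; apply/val_inj/setP => z; rewrite !inE (same_connect r_sym xy). Qed.

Lemma class_of_surj (X : class_type) : exists x, X = class_of x.
Proof. by case: X => X /[dup] /imsetP [x _ ->] XP; exists x; apply/val_inj. Qed.

Definition lift_class (h : {ffun class_type -> F2^o}) : {ffun T -> F2^o} :=
  [ffun x => h (class_of x)].

Lemma lift_class_is_linear : linear lift_class.
Proof. by move=> a u v; apply/ffunP => x; rewrite !ffunE. Qed.
HB.instance Definition _ :=
  GRing.isLinear.Build F2 _ _ _ lift_class lift_class_is_linear.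

Definition class_funs : {vspace {ffun T -> F2^o}} := limg (linfun lift_class).

Lemma dim_class_funs : \dim class_funs = nclasses r.
Proof.
rewrite limg_dim_eq ?dimvf /dim /= ?muln1 ?card_sig //.
apply/eqP; rewrite -subv0; apply/subvP => h; rewrite memv_cap memv_ker lfunE memv0.
case/andP => _ /eqP hE; apply/eqP/ffunP => X; have [x ->] := class_of_surj X.
by have := congr1 (fun g : {ffun T -> F2^o} => g x) hE; rewrite /= !ffunE.
Qed.

Lemma class_funsP (g : {ffun T -> F2^o}) :
  (forall x y, r x y -> g x = g y) -> g \in class_funs.
Proof.
move=> gr; have gc x y : connect r x y -> g x = g y.
  by move/connectP => [p]; elim: p x => [|z p IH] x /= => [_ ->|/andP [/gr -> /IH]].
pose h : {ffun class_type -> F2^o} :=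
  [ffun X : class_type => (if [pick y in val X] is Some y then g y else 0%R : F2^o)].
suff -> : g = lift_class h by have := memv_img (linfun lift_class) (memvf h); rewrite lfunE.
apply/ffunP => x; rewrite !ffunE; case: pickP => [y|/(_ x)]; rewrite inE ?connect0 //.
exact: gc.
Qed.

Lemma class_funs_connect (g : {ffun T -> F2^o}) x y :
  g \in class_funs -> connect r x y -> g x = g y.
Proof. by case/memv_imgP => h _ -> xy; rewrite !lfunE /= !ffunE (class_of_connect xy). Qed.

End ClassFunctions.

Lemma F2_cases (a : F2) : a = 0%R \/ a = 1%R.
Proof. by case: a => [[|[|]]] // ?; [left|right]; apply/val_inj. Qed.

Lemma F2_addr_eq0 (a b : F2) : (a + b == 0)%R = (a == b).
Proof. by case: (F2_cases a) => ->; case: (F2_cases b) => ->. Qed.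

Section FaceColouring.
Variables (C : finType) (D : diagram C).
Local Open Scope ring_scope.
Local Notation dartF := {ffun dart C -> F2^o}.
Local Notation edgeF := {ffun C * bool -> F2^o}.
Local Notation vertF := {ffun C -> F2^o}.

Lemma dart_rot_inj : injective (@Defs.rot C).
Proof.
by move=> [[c s] o] [[c' s'] o'] /= [-> E1 E2]; case: s s' o o' E1 E2 => [] [] [] [].
Qed.

Definition face_step (d : dart C) : dart C := Defs.rot (mate D d).

Lemma face_step_inj : injective face_step.
Proof. by move=> x y /dart_rot_inj /mate_inj. Qed.

Lemma face_relE d d' : face_rel D d d' = (face_step d == d').
Proof.
rewrite eq_sym; apply/existsP/eqP => [[e /andP [+ /eqP ->]]|->].
  by rewrite ext_relE => /eqP ->.
by exists (mate D d); rewrite ext_relE !eqxx.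
Qed.

Lemma connect_sym_face : connect_sym (face_rel D).
Proof. by move=> x y; rewrite !(eq_connect face_relE) (fconnect_sym face_step_inj). Qed.

(* The edge [e] of the 4-valent graph is the outgoing half-edge [(e.1, e.2, true)]; *)
(* it joins [e.1] to [(linkp D e).1].                                              *)
Definition face_coboundary (g : dartF) : edgeF :=
  [ffun e => g (e.1, e.2, true) + g (Defs.rot (e.1, e.2, true))].
Definition edge_boundary (x : edgeF) : vertF :=
  [ffun c => \sum_e x e * ((e.1 == c)%:R + ((linkp D e).1 == c)%:R)].
Definition vertex_coboundary (w : vertF) : edgeF := [ffun e => w e.1 + w (linkp D e).1].
Definition vertex_lift (w : vertF) : dartF := [ffun d => w d.1.1].

Lemma face_coboundary_is_linear : linear face_coboundary.
Proof. by move=> a u v; apply/ffunP => e; rewrite !ffunE scalerDr addrACA. Qed.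
Lemma edge_boundary_is_linear : linear edge_boundary.
Proof.
move=> a u v; apply/ffunP => c; rewrite !ffunE scaler_sumr -big_split.
by apply: eq_bigr => e _; rewrite !ffunE mulrDl scalerAl.
Qed.
Lemma vertex_coboundary_is_linear : linear vertex_coboundary.
Proof. by move=> a u v; apply/ffunP => e; rewrite !ffunE scalerDr addrACA. Qed.
Lemma vertex_lift_is_linear : linear vertex_lift.
Proof. by move=> a u v; apply/ffunP => d; rewrite !ffunE. Qed.
HB.instance Definition _ :=
  GRing.isLinear.Build F2 dartF edgeF _ face_coboundary face_coboundary_is_linear.
HB.instance Definition _ :=
  GRing.isLinear.Build F2 edgeF vertF _ edge_boundary edge_boundary_is_linear.
HB.instance Definition _ :=
  GRing.isLinear.Build F2 vertF edgeF _ vertex_coboundary vertex_coboundary_is_linear.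
HB.instance Definition _ :=
  GRing.isLinear.Build F2 vertF dartF _ vertex_lift vertex_lift_is_linear.

Definition vdot (u w : vertF) : F2 := \sum_c u c * w c.

Lemma sum_delta (f : C -> F2) c : \sum_c' (c == c')%:R * f c' = f c.
Proof.
rewrite (bigD1 c) //= eqxx mul1r big1 ?addr0 // => c' /negbTE.
by rewrite eq_sym => ->; rewrite mul0r.
Qed.

Lemma vdot_boundary x w : vdot (edge_boundary x) w = \sum_e x e * vertex_coboundary w e.
Proof.
rewrite /vdot; under eq_bigr do rewrite ffunE mulr_suml.
rewrite exchange_big /=; apply: eq_bigr => e _; rewrite ffunE.
under eq_bigr do rewrite -mulrA; rewrite -mulr_sumr; congr (_ * _).
by under eq_bigr do rewrite mulrDl; rewrite big_split /= !sum_delta.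
Qed.

Lemma vdot_suml n (a : 'I_n -> F2) (u : 'I_n -> vertF) w :
  vdot (\sum_i a i *: u i) w = \sum_i a i * vdot (u i) w.
Proof.
rewrite /vdot; under eq_bigr do rewrite sum_ffunE mulr_suml.
rewrite exchange_big /=; apply: eq_bigr => i _; rewrite mulr_sumr.
by apply: eq_bigr => c _; rewrite ffunE mulrA.
Qed.

Definition boundaries := limg (linfun edge_boundary).

Definition vdot_tuple n (X : n.-tuple vertF) (w : vertF) : {ffun 'I_n -> F2^o} :=
  [ffun i : 'I_n => vdot X`_i w].

Lemma vdot_tuple_is_linear n (X : n.-tuple vertF) : linear (vdot_tuple X).
Proof.
move=> a u v; apply/ffunP => i; rewrite !ffunE /vdot scaler_sumr -big_split.
by apply: eq_bigr => c _; rewrite !ffunE mulrDr scalerAr.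
Qed.
HB.instance Definition _ n X :=
  GRing.isLinear.Build F2 vertF _ _ (@vdot_tuple n X) (vdot_tuple_is_linear X).

Lemma vertex_coboundary_vdot w e :
  vertex_coboundary w e = vdot (edge_boundary [ffun e' => (e' == e)%:R]) w.
Proof.
rewrite vdot_boundary (bigD1 e) //= !ffunE eqxx mul1r big1 ?addr0 // => e'.
by rewrite ffunE => /negbTE ->; rewrite mul0r.
Qed.

Lemma ker_vdot_tuple_sub n (X : n.-tuple vertF) : (boundaries <= <<X>>)%VS ->
  (lker (linfun (vdot_tuple X)) <= lker (linfun vertex_coboundary))%VS.
Proof.
move=> bX; apply/subvP => w Xw; rewrite memv_ker lfunE.
move: Xw; rewrite memv_ker lfunE /= => /eqP Xw0.
apply/eqP/ffunP => e; rewrite vertex_coboundary_vdot ffunE.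
have /(subvP bX) /coord_span -> : edge_boundary [ffun e' => (e' == e)%:R] \in boundaries.
  by rewrite -[edge_boundary _]lfunE memv_img ?memvf.
rewrite vdot_suml big1 // => i _.
by have := congr1 (fun f : {ffun 'I_n -> F2^o} => f i) Xw0; rewrite !ffunE => ->; rewrite mulr0.
Qed.

Lemma card_le_ker_coboundary_span n (X : n.-tuple vertF) :
  (boundaries <= <<X>>)%VS ->
  (#|C| <= \dim (lker (linfun vertex_coboundary)) + n)%N.
Proof.
move=> bX; have := limg_ker_dim (linfun (vdot_tuple X)) fullv.
rewrite capfv dimvf /dim /= muln1 => <-; apply: leq_add.
  exact/dimvS/ker_vdot_tuple_sub.
by rewrite (leq_trans (dimvS (subvf _))) // dimvf /dim /= muln1 card_ord.
Qed.

(* [vertex_coboundary] is the transpose of [edge_boundary], so their ranks agree. *)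
Lemma card_le_ker_coboundary_boundaries :
  (#|C| <= \dim (lker (linfun vertex_coboundary)) + \dim boundaries)%N.
Proof.
by apply: (@card_le_ker_coboundary_span _ (vbasis boundaries)); rewrite (span_basis (vbasisP _)).
Qed.

Lemma dim_ker_vertex_coboundary :
  (\dim (lker (linfun vertex_coboundary)) <= nclasses (comp_rel D))%N.
Proof.
have lift_inj : (lker (linfun vertex_coboundary) :&: lker (linfun vertex_lift) = 0)%VS.
  apply/eqP; rewrite -subv0; apply/subvP => w; rewrite memv_cap => /andP [_].
  rewrite memv_ker lfunE memv0 => /eqP w0; apply/eqP/ffunP => c.
  by have := congr1 (fun f : dartF => f (c, false, false)) w0; rewrite !ffunE.
rewrite -(limg_dim_eq lift_inj) -(dim_class_funs (comp_rel D)) dimvS //.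
apply/subvP => _ /memv_imgP [w + ->]; rewrite memv_ker lfunE /= => /eqP dw0.
rewrite lfunE /=; apply: class_funsP => x y; rewrite /comp_rel !ffunE.
have wlink e : w e.1 = w (linkp D e).1.
  apply/eqP; rewrite -F2_addr_eq0.
  by have := congr1 (fun f : edgeF => f e) dw0; rewrite !ffunE => ->.
case/orP => [|/eqP -> //]; rewrite ext_relE => /eqP ->.
case: x => [[c s] []] /=; first exact: (wlink (c, s)).
by rewrite (wlink (unlinkp D (c, s))) unlinkpK.
Qed.

Lemma dim_cycles :
  (\dim (lker (linfun edge_boundary)) <= #|C| + nclasses (comp_rel D))%N.
Proof.
have := limg_ker_dim (linfun edge_boundary) fullv.
rewrite capfv dimvf /dim /= muln1 card_prod card_bool.
have := card_le_ker_coboundary_boundaries; have := dim_ker_vertex_coboundary.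
rewrite /boundaries; set b := \dim (limg _).
move=> kK Ckb zb; rewrite -(leq_add2r b) zb muln2 -addnn -addnA leq_add2l.
by rewrite (leq_trans Ckb) // leq_add2r.
Qed.

Lemma sum_at_vertex (f : C * bool -> F2) c :
  \sum_e f e * (e.1 == c)%:R = f (c, false) + f (c, true).
Proof.
transitivity (\sum_(e : C * bool) f (e.1, e.2) * (e.1 == c)%:R).
  by apply: eq_bigr => -[].
rewrite -(pair_bigA _ (fun c' s => f (c', s) * (c' == c)%:R)) /= (bigD1 c) //=.
rewrite big_bool /= eqxx !mulr1 addrC big1 ?add0r 1?addrC // => c' /negbTE c'c.
by rewrite big1 // => s _; rewrite c'c mulr0.
Qed.

Lemma edge_boundaryE x c : edge_boundary x c =
  x (c, false) + x (c, true) + (x (unlinkp D (c, false)) + x (unlinkp D (c, true))).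
Proof.
rewrite ffunE; under eq_bigr do rewrite mulrDr.
rewrite big_split /= sum_at_vertex (reindex_inj (can_inj (unlinkpK D))) /=.
by under eq_bigr do rewrite unlinkpK; rewrite sum_at_vertex.
Qed.

Definition faces := class_funs (face_rel D).

Lemma faces_face_step (g : dartF) d : g \in faces -> g (face_step d) = g d.
Proof.
move=> gF; symmetry; apply: (class_funs_connect connect_sym_face gF).
by apply: connect1; rewrite face_relE.
Qed.

Lemma rot_face_step d : Defs.rot d = face_step (mate D d).
Proof. by rewrite /face_step mateK. Qed.

Lemma F2_sum_pairs_eq0 (a b c d : F2) : a + b + (b + d) + (c + d + (a + c)) = 0.
Proof.
by case: (F2_cases a) => ->; case: (F2_cases b) => ->; case: (F2_cases c) => ->;
  case: (F2_cases d) => ->; apply/val_inj.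
Qed.

Lemma face_coboundary_cycle : (linfun face_coboundary @: faces <= lker (linfun edge_boundary))%VS.
Proof.
apply/subvP => _ /memv_imgP [g gF ->]; rewrite memv_ker !lfunE /=.
apply/eqP/ffunP => c; rewrite edge_boundaryE !ffunE.
have in_rot s : g ((unlinkp D (c, s)).1, (unlinkp D (c, s)).2, true) = g (Defs.rot (c, s, false)).
  by rewrite rot_face_step faces_face_step //=; case: (unlinkp D (c, s)).
have rot_in s : g (Defs.rot ((unlinkp D (c, s)).1, (unlinkp D (c, s)).2, true)) = g (c, s, false).
  by rewrite -(faces_face_step (c, s, false) gF) /face_step /=; case: (unlinkp D (c, s)).
by rewrite !in_rot !rot_in; apply: F2_sum_pairs_eq0.
Qed.

Lemma face_coboundary_kernel :
  (faces :&: lker (linfun face_coboundary) <= class_funs (comp_rel D))%VS.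
Proof.
apply/subvP => g; rewrite memv_cap => /andP [gF]; rewrite memv_ker lfunE => /eqP g0.
have rot_out c s : g (Defs.rot (c, s, true)) = g (c, s, true).
  apply/eqP; rewrite eq_sym -F2_addr_eq0.
  by have := congr1 (fun f : edgeF => f (c, s)) g0; rewrite !ffunE => ->.
have g_rot d : g (Defs.rot d) = g d.
  case: d => [[c s] []]; first exact: rot_out.
  rewrite rot_face_step faces_face_step //= -(faces_face_step (c, s, false) gF) /face_step /=.
  by case: (unlinkp D (c, s)) => c' s'; rewrite rot_out.
have g_mate d : g (mate D d) = g d by rewrite -g_rot -/(face_step d) faces_face_step.
apply: class_funsP => x y; case/orP => [|/eqP xy]; first by rewrite ext_relE => /eqP ->.
have g_at c s o : g (c, s, o) = g (c, false, false).
  have /= e1 := g_rot (c, false, false); have /= e2 := g_rot (c, true, false).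
  have /= e3 := g_rot (c, false, true).
  by case: s o => [] []; rewrite ?e3 ?e2 ?e1.
by case: x y xy => [[c s] o] [[c' s'] o'] /= <-; rewrite !g_at.
Qed.

Lemma face_coboundary_onto : planar D ->
  (linfun face_coboundary @: faces)%VS = lker (linfun edge_boundary).
Proof.
move=> planarD; apply/eqP; rewrite eqEdim face_coboundary_cycle /=.
have := limg_ker_dim (linfun face_coboundary) faces.
have := dimvS face_coboundary_kernel; have := dim_cycles.
rewrite /faces !dim_class_funs planarD.
set u := \dim (_ :&: _); set v := \dim (_ @: _); set z := \dim (lker _); lia.
Qed.

Definition vertex_even (K : dart C -> bool) (c : C) : bool :=
  ~~ odd (K (c, false, false) + K (c, false, true) + K (c, true, false) + K (c, true, true)).

Lemma F2_addr_eq_bool (a b : F2) (k : bool) : a + b = k%:R -> (b == 1) = (a == 1) (+) k.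
Proof. by case: (F2_cases a) => ->; case: (F2_cases b) => ->; case: k => /= /val_eqP. Qed.

(* Planarity is used exactly here: a mate-invariant, vertex-even [K] is a cycle mod 2, *)
(* hence the coboundary of a 2-colouring of the faces.                               *)
Lemma face_colouring (K : dart C -> bool) : planar D ->
  (forall d, K (mate D d) = K d) -> (forall c, vertex_even K c) ->
  exists b : dart C -> bool,
    (forall d, b (face_step d) = b d) /\ (forall d, b (Defs.rot d) = b d (+) K d).
Proof.
move=> planarD Kmate Keven; pose x : edgeF := [ffun e => (K (e.1, e.2, true))%:R].
have : x \in lker (linfun edge_boundary).
  rewrite memv_ker lfunE /=; apply/eqP/ffunP => c; rewrite edge_boundaryE !ffunE /=.
  have Kin s : K ((unlinkp D (c, s)).1, (unlinkp D (c, s)).2, true) = K (c, s, false).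
    by rewrite -[RHS]Kmate /=; case: (unlinkp D (c, s)).
  rewrite !Kin; move: (Keven c); rewrite /vertex_even.
  by case: (K (c, false, false)); case: (K (c, false, true)); case: (K (c, true, false));
     case: (K (c, true, true)) => //= _; apply/val_inj.
rewrite -(face_coboundary_onto planarD) => /memv_imgP [g gF]; rewrite lfunE /= => gx.
exists (fun d => g d == 1); split => [d|]; first by rewrite faces_face_step.
have g_out c s : g (c, s, true) + g (Defs.rot (c, s, true)) = (K (c, s, true))%:R.
  by have := congr1 (fun f : edgeF => f (c, s)) gx; rewrite !ffunE.
move=> [[c s] []]; first exact/F2_addr_eq_bool/g_out.
rewrite rot_face_step faces_face_step // -[in RHS](faces_face_step _ gF) /face_step -[K _]Kmate /=.
case: (unlinkp D (c, s)) => c' s'; rewrite (F2_addr_eq_bool (g_out c' s')).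
by case: (g (c', s', true) == 1); case: (K (c', s', true)).
Qed.

End FaceColouring.

Lemma odd_sum (I : finType) (f : I -> nat) :
  odd (\sum_i f i) = \big[addb/false]_i odd (f i).
Proof. exact: (big_morph odd oddD). Qed.

Section EvenIntersection.
Variables (C : finType) (D : diagram C).

(* For [K] marking the half-edges of a union of closed curves: the curves go through *)
(* [c] along exactly one of its two strands.                                       *)
Definition strand_at (K : dart C -> bool) (c : C) : bool :=
  [&& K (c, false, false) == K (c, false, true), K (c, true, false) == K (c, true, true)
    & K (c, false, false) != K (c, true, false)].

Lemma sum_dart (f : dart C -> nat) :
  \sum_d f d =
  \sum_c (f (c, false, false) + f (c, false, true) + (f (c, true, false) + f (c, true, true))).
Proof.
transitivity (\sum_(p : (C * bool) * bool) f (p.1.1, p.1.2, p.2)); first by apply: eq_bigr => -[[]].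
rewrite -(pair_bigA _ (fun p o => f (p.1, p.2, o))) /=.
transitivity (\sum_(p : C * bool) (f (p.1, p.2, false) + f (p.1, p.2, true))).
  by apply: eq_bigr => p _; rewrite big_bool addnC.
rewrite -(pair_bigA _ (fun c s => f (c, s, false) + f (c, s, true))) /=.
by apply: eq_bigr => c _; rewrite big_bool /=; lia.
Qed.

Lemma mate_invariant_sum_even (w : dart C -> bool) :
  (forall d, w (mate D d) = w d) -> ~~ odd (\sum_d w d).
Proof.
move=> w_mate.
transitivity (~~ odd (\sum_(p : (C * bool) * bool) w (p.1.1, p.1.2, p.2))).
  by congr (~~ odd _); apply: eq_bigr => -[[]].
rewrite -(pair_bigA _ (fun p o => (w (p.1, p.2, o) : nat))) /=.
under eq_bigr do rewrite big_bool.
rewrite big_split /= [X in _ + X](reindex_inj (@linkp_inj _ D)) /=.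
under [X in _ + X]eq_bigr => p _ do rewrite -w_mate /= -surjective_pairing linkpK.
by under eq_bigr do rewrite -surjective_pairing; rewrite addnn odd_double.
Qed.

Lemma odd_colouring_at (K b : dart C -> bool) c : vertex_even K c ->
  (forall s o, b (Defs.rot (c, s, o)) = b (c, s, o) (+) K (c, s, o)) ->
  odd ((~~ K (c, false, false) && b (c, false, false))
       + (~~ K (c, false, true) && b (c, false, true))
       + ((~~ K (c, true, false) && b (c, true, false))
          + (~~ K (c, true, true) && b (c, true, true))))
  = strand_at K c.
Proof.
rewrite /vertex_even /strand_at => + b_rot.
have /= := b_rot false false; have /= := b_rot true false.
have /= := b_rot false true; have /= := b_rot true true.
case: (b (c, false, false)); case: (b (c, true, false)); case: (b (c, false, true));
  case: (b (c, true, true)); case: (K (c, false, false)); case: (K (c, true, false));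
  case: (K (c, false, true)); case: (K (c, true, true)) => //.
Qed.

(* The curves marked by [K] and by its complement cross transversally exactly at the *)
(* [strand_at] crossings, and two closed curves in the plane cross an even number of *)
(* times.                                                                           *)
Lemma even_card_strand_at (K : dart C -> bool) : planar D ->
  (forall d, K (mate D d) = K d) -> (forall c, vertex_even K c) ->
  ~~ odd #|[set c | strand_at K c]|.
Proof.
move=> planarD K_mate K_even.
have [b [b_face b_rot]] := face_colouring planarD K_mate K_even.
pose w d := ~~ K d && b d.
have w_mate d : w (mate D d) = w d.
  rewrite /w K_mate; case Kd: (K d) => //=.
  by rewrite -[b (mate D d)]b_face /face_step mateK b_rot Kd addbF.
suff -> : odd #|[set c | strand_at K c]| = odd (\sum_d w d) by apply: mate_invariant_sum_even.
rewrite sum_dart -sum1_card big_mkcond /= !odd_sum; apply: eq_bigr => c _.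
by rewrite inE -(@odd_colouring_at K b c) // /w /=; case: (odd (_ + _ + _)).
Qed.
End EvenIntersection.

Section StateCurves.
Variables (C : finType) (D : diagram C) (res : C -> bool).
Local Notation inner := (inner D res).
Local Notation at_vertex := (at_vertex D res).

Lemma inner_crossing d : (inner d).1.1 = d.1.1.
Proof. by case: d => [[c s] o] /=; rewrite /Defs.inner; case: is_virtual; case: res. Qed.

Lemma innerK : involutive inner.
Proof.
move=> [[c s] o]; rewrite /Defs.inner /=.
by case vc: (is_virtual (kind D c)); case rc: (res c) => /=; rewrite ?vc ?rc /= ?negbK.
Qed.

Lemma inner_inj : injective inner. Proof. exact: inv_inj innerK. Qed.

Lemma inner_out d : (inner d).2 = if at_vertex d then d.2 else ~~ d.2.
Proof.
by case: d => [[c s] o]; rewrite /Defs.inner /Defs.at_vertex /=; case: is_virtual; case: res.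
Qed.

Lemma inner_neq d : inner d != d.
Proof.
case: d => [[c s] o]; rewrite /Defs.inner /=.
case: (is_virtual (kind D c)); case: (res c); rewrite /= !xpair_eqE;
  by case: s; case: o; rewrite /= ?andbF.
Qed.

Lemma weightP (tau : {ffun dart C -> bool}) :
  reflect [/\ forall d, tau (mate D d) = tau d,
              forall d, ~~ at_vertex d -> tau (inner d) = tau d &
              forall d, at_vertex d -> tau (inner d) != tau d]
          (weightb D res tau).
Proof.
apply: (iffP andP) => [[/forallP arcs /forallP vtx]|[t_mate t_arc t_vtx]].
  split=> d.
  - by have /forallP/(_ (mate D d)) := arcs d; rewrite /arc_rel ext_relE eqxx => /eqP.
  - by move=> dv; have /forallP/(_ (inner d)) := arcs d; rewrite /arc_rel eqxx dv orbT => /eqP.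
  - by move=> dv; have := vtx d; rewrite dv eq_sym.
split; apply/forallP => d; last by apply/implyP => /t_vtx; rewrite eq_sym.
apply/forallP => e; apply/implyP; rewrite /arc_rel ext_relE.
by case/orP => [/eqP -> | /andP [/eqP -> /t_arc ->]]; rewrite ?t_mate.
Qed.

Definition state_step (d : dart C) : dart C := inner (mate D d).

Lemma state_step_inj : injective state_step.
Proof. by move=> x y /inner_inj /mate_inj. Qed.

Lemma state_step_mate d : state_step (mate D (state_step d)) = mate D d.
Proof. by rewrite /state_step mateK innerK. Qed.

Lemma inner_state_step d : inner d = state_step (mate D d).
Proof. by rewrite /state_step mateK. Qed.

Lemma mate_iter_state_step n x : iter n state_step x = mate D x ->
  forall j, j <= n -> mate D (iter j state_step x) = iter (n - j) state_step x.
Proof.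
move=> nx; elim=> [|j IH] jn; first by rewrite subn0 nx.
apply: state_step_inj; rewrite state_step_mate IH 1?ltnW //.
by rewrite -iterS subnSK.
Qed.

(* This is what makes the curves of a state orientable. *)
Lemma not_fconnect_mate x : ~~ fconnect state_step x (mate D x).
Proof.
apply/negP => /iter_findex; set n := findex _ _ _ => nx.
have mate_iter := mate_iter_state_step nx.
have [m [n_odd|n_even]] : exists m, n = m.*2.+1 \/ n = m.*2.
  by exists n./2; have := odd_double_half n; case: odd => /= nE; [left|right]; lia.
- have := mate_iter m.+1 ltac:(lia); rewrite (_ : n - m.+1 = m) ?iterS; last lia.
  move/(congr1 (mate D)); rewrite mateK => step_m; set y := iter m _ _ in step_m.
  by have := inner_neq (mate D y); rewrite -/(state_step y) step_m eqxx.
- have := mate_iter m ltac:(lia); rewrite (_ : n - m = m); last lia.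
  by move/eqP; rewrite (negbTE (mate_neq _ _)).
Qed.

Definition curve_darts (x : dart C) : {set dart C} :=
  [set y | fconnect state_step x y || fconnect state_step (mate D x) y].

Lemma curve_darts_step x : curve_darts (state_step x) = curve_darts x.
Proof.
apply/setP => y; rewrite !inE -(same_fconnect1 state_step_inj).
by rewrite -[mate D x]state_step_mate -(same_fconnect1 state_step_inj).
Qed.

Lemma curve_darts_mate x : curve_darts (mate D x) = curve_darts x.
Proof. by apply/setP => y; rewrite !inE mateK orbC. Qed.

(* Walking from [x] along its curve reaches a fixed root dart of that curve. *)
Definition forward (x : dart C) : bool :=
  fconnect state_step x (odflt x [pick y in curve_darts x]).

Lemma forward_step x : forward (state_step x) = forward x.
Proof.
rewrite /forward curve_darts_step; case: pickP => [y _|/(_ x)]; last by rewrite inE connect0.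
by rewrite -(same_fconnect1 state_step_inj).
Qed.

Lemma forward_mate x : forward (mate D x) = ~~ forward x.
Proof.
rewrite /forward curve_darts_mate; case: pickP => [y|/(_ x)]; last by rewrite inE connect0.
rewrite inE => /orP xy_or; case xy: (fconnect _ x y); last by case: xy_or; rewrite ?xy.
apply/negbTE/negP => mxy; have := not_fconnect_mate x.
by rewrite (connect_trans xy) // (fconnect_sym state_step_inj).
Qed.

Lemma forward_inner x : forward (inner x) = ~~ forward x.
Proof. by rewrite inner_state_step forward_step forward_mate. Qed.

Lemma weight_exists : exists tau, weightb D res tau.
Proof.
exists [ffun d => forward d (+) d.2]; apply/weightP; split => d; rewrite ?ffunE.
- by rewrite forward_mate mate_out; case: forward; case: d.2.
- by move=> dv; rewrite forward_inner inner_out (negbTE dv); case: forward; case: d.2.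
- by move=> dv; rewrite forward_inner inner_out dv; case: forward; case: d.2.
Qed.

End StateCurves.

Section VirtualProduct.
Variables (C : finType) (D : diagram C).
Local Open Scope ring_scope.
Local Notation virtual c := (is_virtual (kind D c)).

Definition vprod (tau : {ffun dart C -> bool}) : int :=
  \prod_(c | virtual c) (sgb (tau (c, false, false)) * sgb (tau (c, true, false))).

Lemma sgb_addb a k : sgb (a (+) k) = (-1) ^+ k * sgb a.
Proof. by case: a; case: k; rewrite /sgb /= ?expr0 ?expr1 ?mul1r ?mulN1r ?opprK. Qed.

Lemma prod_sign (P b : pred C) :
  \prod_(c | P c) (-1) ^+ b c = (-1) ^+ #|[set c | P c & b c]| :> int.
Proof.
rewrite -prodr_const big_mkcond [RHS]big_mkcond /=.
by apply: eq_bigr => c _; rewrite inE; case: (P c); case: (b c).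
Qed.

(* By [even_card_strand_at], the signs collected at the virtual crossings can be *)
(* collected at the other crossings instead.                                     *)
Lemma vprod_addb (tau : {ffun dart C -> bool}) (K : dart C -> bool) : planar D ->
  (forall d, K (mate D d) = K d) -> (forall c, vertex_even K c) ->
  (forall c s, virtual c -> K (c, s, false) = K (c, s, true)) ->
  vprod [ffun d => tau d (+) K d] =
  vprod tau * (-1) ^+ #|[set c | ~~ virtual c & strand_at K c]|.
Proof.
move=> planarD K_mate K_even K_virtual.
rewrite /vprod.
under eq_bigr => c _ do rewrite !ffunE !sgb_addb mulrACA -signr_addb mulrC.
rewrite big_split /=; congr (_ * _).
have -> : \prod_(c | virtual c) (-1) ^+ (K (c, false, false) (+) K (c, true, false)) =
          \prod_(c | virtual c) (-1) ^+ strand_at K c :> int.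
  apply: eq_bigr => c vc; rewrite /strand_at -!K_virtual // !eqxx /=.
  by case: (K (c, false, false)); case: (K (c, true, false)).
rewrite prod_sign -signr_odd -[RHS]signr_odd; congr (_ ^+ _).
have := even_card_strand_at planarD K_mate K_even.
rewrite -(cardsID [set c | virtual c]) oddD.
have -> : [set c | strand_at K c] :&: [set c | virtual c] = [set c | virtual c & strand_at K c].
  by apply/setP => c; rewrite !inE andbC.
have -> : [set c | strand_at K c] :\: [set c | virtual c] = [set c | ~~ virtual c & strand_at K c].
  by apply/setP => c; rewrite !inE andbC.
by case: odd; case: odd.
Qed.

Lemma inner_invariant_vertex_even res (K : dart C -> bool) c :
  (forall s o, K (inner D res (c, s, o)) = K (c, s, o)) -> vertex_even K c.
Proof.
move=> K_inner; have := K_inner false false; have := K_inner true false.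
have := K_inner false true; have := K_inner true true; rewrite /vertex_even /Defs.inner.
case: (virtual c); [|case: (res c)] => /=;
  by case: (K (c, false, false)); case: (K (c, true, false)); case: (K (c, false, true));
     case: (K (c, true, true)).
Qed.

Lemma inner_invariant_not_strand_at res (K : dart C -> bool) c : ~~ virtual c ->
  (forall s o, K (inner D res (c, s, o)) = K (c, s, o)) -> ~~ strand_at K c.
Proof.
move=> /negbTE nvc K_inner; have := K_inner false false; have := K_inner false true.
rewrite /strand_at /Defs.inner nvc; case: (res c) => /=;
  by case: (K (c, false, false)); case: (K (c, true, false)); case: (K (c, false, true));
     case: (K (c, true, true)).
Qed.

Lemma vprod_weight_indep res (tau1 tau2 : {ffun dart C -> bool}) : planar D ->
  weightb D res tau1 -> weightb D res tau2 -> vprod tau1 = vprod tau2.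
Proof.
move=> planarD /weightP [t1_mate t1_arc t1_vtx] /weightP [t2_mate t2_arc t2_vtx].
pose K d := tau1 d (+) tau2 d.
have -> : tau1 = [ffun d => tau2 d (+) K d].
  by apply/ffunP => d; rewrite ffunE /K addbC addbK.
have K_inner d : K (inner D res d) = K d.
  rewrite /K; case: (boolP (at_vertex D res d)) => dv; last by rewrite t1_arc ?t2_arc.
  by move: (t1_vtx d dv) (t2_vtx d dv); do 2 case: (tau1 _); do 2 case: (tau2 _).
rewrite vprod_addb //.
- rewrite (_ : [set c | _ & _] = set0) ?cards0 ?mulr1 //.
  apply/setP => c; rewrite !inE; case: (boolP (virtual c)) => //= nvc.
  by apply/negbTE/(inner_invariant_not_strand_at nvc) => s o; apply: K_inner.
- by move=> d; rewrite /K t1_mate t2_mate.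
- by move=> c; apply: inner_invariant_vertex_even.
- by move=> c s vc; rewrite -(K_inner (c, s, false)) /Defs.inner vc.
Qed.

Lemma ipar_weight res (tau : {ffun dart C -> bool}) :
  planar D -> weightb D res tau -> ipar D res = vprod tau.
Proof.
move=> planarD tau_w; rewrite /ipar; case: pickP => [t t_w|/(_ tau)]; last by rewrite tau_w.
exact: vprod_weight_indep t_w tau_w.
Qed.

End VirtualProduct.

Lemma eq_nclasses (T : finType) (r r' : rel T) : r =2 r' -> nclasses r = nclasses r'.
Proof.
move=> rr; rewrite /nclasses; congr #|pred_of_set _|; apply: eq_imset => x.
by apply/setP => y; rewrite !inE (eq_connect rr).
Qed.

Lemma nclasses_n_comp (T : finType) (r : rel T) : connect_sym r -> nclasses r = n_comp r T.
Proof.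
move=> r_sym; rewrite /nclasses.
have -> : [set [set y | connect r x y] | x : T] = [set [set y | connect r x y] | x in roots r].
  apply/setP => X; apply/imsetP/imsetP => [[x _ ->]|[x _ ->]]; last by exists x.
  exists (fingraph.root r x); first exact: roots_root.
  by apply/setP => y; rewrite !inE (same_connect r_sym (connect_root r x)).
rewrite card_in_imset => [|x y]; first by apply: eq_card => x; rewrite !inE andbT.
move=> /eqP xr /eqP yr /setP /(_ y); rewrite !inE connect0 => xy.
by rewrite -xr -yr; apply/(fingraph.rootP r_sym).
Qed.

Section AddEdge.
Variables (T : finType) (r : rel T) (a b : T).
Hypothesis r_sym : symmetric r.

Definition add_edge : rel T :=
  fun x y => [|| r x y, (x == a) && (y == b) | (x == b) && (y == a)].

Lemma add_edge_sym : symmetric add_edge.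
Proof.
move=> x y; rewrite /add_edge r_sym; congr (_ || _).
by rewrite orbC; congr (_ || _); rewrite andbC.
Qed.

Lemma connect_add_edge x y : connect add_edge x y =
  [|| connect r x y, connect r x a && connect r b y | connect r x b && connect r a y].
Proof.
apply/idP/idP => [xy|].
  set P := [pred z | [|| connect r x z, connect r x a && connect r b z
                       | connect r x b && connect r a z]].
  have : closed add_edge P.
    apply: (intro_closed (sym_connect_sym add_edge_sym)) => z w; rewrite !inE.
    case/or3P => [zw|/andP [/eqP -> /eqP ->]|/andP [/eqP -> /eqP ->]].
    - have zw' u : connect r u z -> connect r u w by move/connect_trans; apply; apply: connect1.
      by case/or3P => [/zw' ->|/andP [-> /zw' ->]|/andP [-> /zw' ->]]; rewrite ?orbT.
    - by case/or3P => [xa|/andP [xa _]|/andP [xb _]]; rewrite ?xa ?xb connect0 ?orbT.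
    - by case/or3P => [xa|/andP [xa _]|/andP [xb _]]; rewrite ?xa ?xb connect0 ?orbT.
  by move/closed_connect/(_ x y xy); rewrite !inE connect0 => <-.
have sub : subrel (connect r) (connect add_edge).
  by apply: connect_sub => u v uv; apply: connect1; rewrite /add_edge uv.
have ab : connect add_edge a b by apply: connect1; rewrite /add_edge !eqxx orbT.
have ba : connect add_edge b a by apply: connect1; rewrite /add_edge !eqxx !orbT.
case/or3P => [/sub //|/andP [xa b_y]|/andP [xb ay]].
- exact: connect_trans (connect_trans (sub _ _ xa) ab) (sub _ _ b_y).
- exact: connect_trans (connect_trans (sub _ _ xb) ba) (sub _ _ ay).
Qed.

Lemma nclasses_add_edge : nclasses add_edge + ~~ connect r a b = nclasses r.
Proof.
have r_csym := sym_connect_sym r_sym; have e_csym := sym_connect_sym add_edge_sym.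
set A := closure r (pred2 a b).
have inA y : (y \in A) = connect r a y || connect r b y.
  rewrite /A unfold_in /=; apply/pred0Pn/orP => [[z /andP [/= yz /pred2P [] za]]|[ay|b_y]].
  - by left; rewrite -za r_csym.
  - by right; rewrite -za r_csym.
  - by exists a; rewrite !inE /= eqxx r_csym ay.
  - by exists b; rewrite !inE /= eqxx orbT r_csym b_y.
rewrite (nclasses_n_comp e_csym) (nclasses_n_comp r_csym) (n_compC A) [RHS](n_compC A).
rewrite (n_comp_closure2 r_csym).
have -> : n_comp add_edge A = 1.
  rewrite -(n_comp_connect e_csym a); apply: eq_n_comp_r => y.
  rewrite inA -[y \in _]/(connect add_edge a y) connect_add_edge connect0 /=.
  by case: (connect r a y); rewrite ?andbF ?orbF.
have -> : n_comp add_edge [predC A] = n_comp r [predC A].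
  apply: eq_card => y; rewrite !inE; case: (boolP (y \in A)) => yA; rewrite ?andbF ?andbT //.
  have /norP [/negbTE ya /negbTE yb] : ~~ (connect r y a || connect r y b).
    by rewrite (r_csym y a) (r_csym y b) -inA.
  have connectE : connect add_edge y =1 connect r y.
    by move=> z; rewrite connect_add_edge ya yb /= !orbF.
  by rewrite /roots /fingraph.root (eq_pick connectE).
by rewrite add1n addSn addnC.
Qed.

End AddEdge.

Section ArcsThroughCrossing.
Variables (C : finType) (D : diagram C) (res : C -> bool) (c0 : C).
Local Notation step := (state_step D res).
Local Notation inner := (inner D res).

(* The curves of the state, cut open at [c0]. *)
Definition cut_rel (d e : dart C) : bool :=
  ext_rel D d e || (d.1.1 != c0) && (e == inner d).

Lemma cut_rel_sym : symmetric cut_rel.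
Proof.
move=> d e; rewrite /cut_rel ext_rel_sym; congr (_ || _).
by apply/andP/andP => -[dc0 /eqP ->]; rewrite ?inner_crossing (innerK D res).
Qed.

Definition exits (y : dart C) : bool := (mate D y).1.1 == c0.
Definition exit_time (x : dart C) : nat := find exits (orbit step x).
Definition exit_dart (x : dart C) : dart C := mate D (iter (exit_time x) step x).

Definition exit_arc (x : dart C) : {set dart C} :=
  [set y | [exists j : 'I_(exit_time x).+1,
             (y == iter j step x) || (y == mate D (iter j step x))]].

Lemma weight_out_step (tau : {ffun dart C -> bool}) : weightb D res tau ->
  forall d, tau (step d) (+) (step d).2 = tau d (+) d.2.
Proof.
case/weightP => t_mate t_arc t_vtx d; rewrite /state_step inner_out.
case: (boolP (at_vertex D res _)) => dv.
  by move: (t_vtx _ dv); rewrite t_mate mate_out; case: (tau _); case: (tau d); case: d.2.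
by rewrite t_arc // t_mate mate_out; case: (tau d); case: d.2.
Qed.

Lemma weight_out_exit (tau : {ffun dart C -> bool}) x : weightb D res tau ->
  tau (exit_dart x) (+) (exit_dart x).2 = ~~ (tau x (+) x.2).
Proof.
move=> tau_w; have /weightP [t_mate _ _] := tau_w.
rewrite /exit_dart t_mate mate_out addbN; congr (~~ _).
by elim: (exit_time x) => //= n <-; apply: weight_out_step.
Qed.

Lemma exit_dart_neq x : exit_dart x != x.
Proof.
have [tau tau_w] := weight_exists D res.
by apply/eqP => ex; have := weight_out_exit x tau_w; rewrite ex; case: (_ (+) _).
Qed.

Variable x : dart C.
Hypothesis x_c0 : x.1.1 = c0.

Lemma exits_orbit : has exits (orbit step x).
Proof.
apply/hasP; exists (finv step x); first by rewrite -fconnect_orbit fconnect_finv.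
rewrite /exits -[mate D _](innerK D res) -/(step _) f_finv ?inner_crossing //.
by rewrite x_c0.
exact: state_step_inj.
Qed.

Lemma exits_exit_time : exits (iter (exit_time x) step x).
Proof.
have := nth_find x exits_orbit; rewrite nth_traject // -(size_orbit step x) -has_find.
exact: exits_orbit.
Qed.

Lemma exits_before j : j < exit_time x -> ~~ exits (iter j step x).
Proof.
move=> j_lt; have j_order : j < order step x.
  by rewrite (ltn_trans j_lt) // -(size_orbit step x) -has_find exits_orbit.
by have := before_find x j_lt; rewrite nth_traject // => ->.
Qed.

Lemma exit_dart_crossing : (exit_dart x).1.1 = c0.
Proof. exact/eqP/exits_exit_time. Qed.

Lemma exit_arcP y : reflect
  (exists2 j, j <= exit_time x & y = iter j step x \/ y = mate D (iter j step x))
  (y \in exit_arc x).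
Proof.
rewrite inE; apply: (iffP existsP) => [[j /orP [] /eqP ->]|[j j_le [] ->]].
- by exists j; [rewrite -ltnS | left].
- by exists j; [rewrite -ltnS | right].
- by exists (Ordinal (j_le : j < (exit_time x).+1)); rewrite eqxx.
- by exists (Ordinal (j_le : j < (exit_time x).+1)); rewrite eqxx orbT.
Qed.

Lemma mem_exit_arc_mate y : (mate D y \in exit_arc x) = (y \in exit_arc x).
Proof.
suff exit_arc_mate z : z \in exit_arc x -> mate D z \in exit_arc x.
  by apply/idP/idP => [/exit_arc_mate|/exit_arc_mate //]; rewrite mateK.
case/exit_arcP => j j_le [] ->; apply/exit_arcP; exists j => //; rewrite ?mateK.
  by right.
by left.
Qed.

Lemma mem_exit_arc_inner y : y.1.1 != c0 -> (inner y \in exit_arc x) = (y \in exit_arc x).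
Proof.
suff exit_arc_inner z : z.1.1 != c0 -> z \in exit_arc x -> inner z \in exit_arc x.
  move=> yc0; apply/idP/idP => [|/exit_arc_inner]; last exact.
  by move/exit_arc_inner; rewrite (innerK D res) inner_crossing; apply.
move=> zc0 /exit_arcP [j j_le [] z_def]; apply/exit_arcP.
- case: j j_le z_def => [|j] j_le z_def; first by move: zc0; rewrite z_def x_c0 eqxx.
  by exists j; [exact: ltnW | right; rewrite z_def iterS /state_step (innerK D res)].
- have j_lt : j < exit_time x.
    rewrite ltn_neqAle j_le andbT; apply: contraNneq zc0 => j_exit.
    by rewrite z_def j_exit exit_dart_crossing.
  by exists j.+1 => //; left; rewrite z_def iterS.
Qed.

Lemma exit_arc_at_c0 y : y \in exit_arc x -> y.1.1 = c0 -> y = x \/ y = exit_dart x.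
Proof.
case/exit_arcP => j j_le [] -> y_c0.
- case: j j_le y_c0 => [|j] j_lt y_c0; first by left.
  have := exits_before j_lt.
  by rewrite /exits -(inner_crossing D res) -/(step _) -iterS y_c0 eqxx.
- right; suff -> : j = exit_time x by [].
  apply/eqP; rewrite eqn_leq j_le leqNgt; apply/negP => /exits_before.
  by rewrite /exits y_c0 eqxx.
Qed.

Lemma closed_exit_arc : closed cut_rel (exit_arc x).
Proof.
move=> d e; rewrite /cut_rel ext_relE => /orP [/eqP ->|/andP [dc0 /eqP ->]].
  by rewrite mem_exit_arc_mate.
by rewrite mem_exit_arc_inner.
Qed.

Lemma connect_cut_iter j : j <= exit_time x -> connect cut_rel x (iter j step x).
Proof.
elim: j => [|j IH] j_lt //; apply: connect_trans (IH (ltnW j_lt)) _.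
apply: (@connect_trans _ _ (mate D (iter j step x))); apply: connect1.
  by rewrite /cut_rel ext_relE eqxx.
by rewrite /cut_rel (exits_before j_lt) eqxx orbT.
Qed.

Lemma connect_cut_exit : connect cut_rel x (exit_dart x).
Proof.
apply: connect_trans (connect_cut_iter (leqnn _)) (connect1 _).
by rewrite /cut_rel ext_relE eqxx.
Qed.

Lemma connect_cut_at_c0 y : y.1.1 = c0 ->
  connect cut_rel x y = (y == x) || (y == exit_dart x).
Proof.
move=> y_c0; apply/idP/idP => [xy|/orP [] /eqP ->]; last exact: connect_cut_exit.
  have y_arc : y \in exit_arc x.
    by rewrite -(closed_connect closed_exit_arc xy); apply/exit_arcP; exists 0; [|left].
  by case: (exit_arc_at_c0 y_arc y_c0) => ->; rewrite eqxx ?orbT.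
exact: connect0.
Qed.

End ArcsThroughCrossing.

Definition bool2_eqE := (xpair_eqE, eqxx, eqb_id, eqbF_neg).

Lemma perfect_matching_bool2 (P : bool * bool -> bool * bool) :
  (forall u, P u != u) -> involutive P ->
  [\/ P (false, false) = (true, true) /\ P (true, false) = (false, true),
      P (false, false) = (true, false) /\ P (false, true) = (true, true) |
      P (false, false) = (false, true) /\ P (true, false) = (true, true)].
Proof.
move=> Pneq PK; have /eqP := Pneq (false, false); have /eqP := Pneq (true, false).
have /eqP := Pneq (false, true); have /eqP := Pneq (true, true).
have := PK (false, false); have := PK (true, false); have := PK (false, true).
have := PK (true, true).
case E1: (P (false, false)) => [[] []]; case E2: (P (true, false)) => [[] []];
  case E3: (P (false, true)) => [[] []]; case E4: (P (true, true)) => [[] []];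
  rewrite ?E1 ?E2 ?E3 ?E4 // => *;
  by [constructor 1 | constructor 2 | constructor 3].
Qed.

Section ExitPairing.
Variables (C : finType) (D : diagram C) (res : C -> bool) (c0 : C).
Local Notation cut := (cut_rel D res c0).

(* Following the state from a half-edge at [c0] until it first returns to [c0] *)
(* pairs up the four half-edges at [c0].                                      *)
Definition exit_pairing (u : bool * bool) : bool * bool :=
  let: d := exit_dart D res c0 (c0, u.1, u.2) in (d.1.2, d.2).

Lemma exit_dart_c0 s o :
  exit_dart D res c0 (c0, s, o) = (c0, (exit_pairing (s, o)).1, (exit_pairing (s, o)).2).
Proof.
rewrite /exit_pairing /=; have := @exit_dart_crossing _ D res c0 (c0, s, o) erefl.
by case: exit_dart => [[c s'] o'] /= ->.
Qed.

Lemma connect_cut_c0 s o s' o' : connect cut (c0, s, o) (c0, s', o') =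
  ((s', o') == (s, o)) || ((s', o') == exit_pairing (s, o)).
Proof.
rewrite (@connect_cut_at_c0 _ D res c0 (c0, s, o) erefl (c0, s', o') erefl) exit_dart_c0.
by case: exit_pairing => s1 o1; rewrite !xpair_eqE eqxx.
Qed.

Lemma exit_pairing_neq u : exit_pairing u != u.
Proof.
case: u => s o; have := exit_dart_neq D res c0 (c0, s, o); rewrite exit_dart_c0.
by case: exit_pairing => s1 o1; rewrite !xpair_eqE eqxx.
Qed.

Lemma exit_pairingK : involutive exit_pairing.
Proof.
move=> [s o]; have := connect_cut_c0 s o (exit_pairing (s, o)).1 (exit_pairing (s, o)).2.
rewrite -surjective_pairing eqxx orbT (sym_connect_sym (cut_rel_sym D res c0)).
by rewrite connect_cut_c0 -surjective_pairing eq_sym (negbTE (exit_pairing_neq _)) => /eqP.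
Qed.

Lemma exit_pairing_cases :
  [\/ exit_pairing (false, false) = (true, true) /\ exit_pairing (true, false) = (false, true),
      exit_pairing (false, false) = (true, false) /\ exit_pairing (false, true) = (true, true) |
      exit_pairing (false, false) = (false, true) /\ exit_pairing (true, false) = (true, true)].
Proof. exact: perfect_matching_bool2 exit_pairing_neq exit_pairingK. Qed.

End ExitPairing.

Section ChangeOfResolution.
Variables (C : finType) (D : diagram C) (res : C -> bool) (c0 : C).
Hypotheses (planarD : planar D) (c0_nonvirtual : ~~ is_virtual (kind D c0)).
Hypothesis res_c0 : res c0.
Local Notation res' := (flip_at res c0).
Local Notation cut := (cut_rel D res c0).
Local Notation I1 := (c0, false, false).
Local Notation I2 := (c0, true, false).
Local Notation O1 := (c0, false, true).
Local Notation O2 := (c0, true, true).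
Local Notation exit_pairing := (exit_pairing D res c0).

Lemma flip_at_c0 : res' c0 = false.
Proof. by rewrite /flip_at eqxx res_c0. Qed.

Lemma flip_at_ne c : c != c0 -> res' c = res c.
Proof. by rewrite /flip_at => /negbTE ->. Qed.

Lemma inner_flip_ne d : d.1.1 != c0 -> inner D res' d = inner D res d.
Proof. by case: d => [[c s] o] /= cc0; rewrite /Defs.inner flip_at_ne. Qed.

Lemma at_vertex_flip_ne d : d.1.1 != c0 -> at_vertex D res' d = at_vertex D res d.
Proof. by case: d => [[c s] o] /= cc0; rewrite /Defs.at_vertex /= flip_at_ne. Qed.

Lemma inner_c0 s o : inner D res (c0, s, o) = (c0, ~~ s, ~~ o).
Proof. by rewrite /Defs.inner (negbTE c0_nonvirtual) res_c0. Qed.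

Lemma inner_flip_c0 s o : inner D res' (c0, s, o) = (c0, ~~ s, o).
Proof. by rewrite /Defs.inner (negbTE c0_nonvirtual) flip_at_c0. Qed.

Lemma curve_rel_split rr a1 b1 a2 b2 : (forall c, c != c0 -> rr c = res c) ->
  (forall s o e, (e == inner D rr (c0, s, o)) =
     [|| ((c0, s, o) == a1) && (e == b1), ((c0, s, o) == b1) && (e == a1),
         ((c0, s, o) == a2) && (e == b2) | ((c0, s, o) == b2) && (e == a2)]) ->
  a1.1.1 = c0 -> b1.1.1 = c0 -> a2.1.1 = c0 -> b2.1.1 = c0 ->
  curve_rel D rr =2 add_edge (add_edge cut a1 b1) a2 b2.
Proof.
move=> rr_ne rr_c0 a1c b1c a2c b2c [[c s] o] e; rewrite /curve_rel /add_edge /cut_rel -!orbA.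
case: (eqVneq c c0) => [->|cc0] /=; first by rewrite rr_c0 !orbA.
have ne_c0 z : z.1.1 = c0 -> ((c, s, o) == z) = false.
  by move=> zc; apply/negbTE; apply: contraNneq cc0 => /(congr1 (fun d => d.1.1)) /= ->; rewrite zc.
by rewrite !ne_c0 //= rr_ne // orbF.
Qed.

Lemma curve_rel_oriented : curve_rel D res =2 add_edge (add_edge cut I1 O2) I2 O1.
Proof.
apply: curve_rel_split => // s o e; rewrite inner_c0.
by case: s; case: o; rewrite !bool2_eqE /= ?orbF.
Qed.

Lemma curve_rel_disoriented : curve_rel D res' =2 add_edge (add_edge cut I1 I2) O1 O2.
Proof.
apply: curve_rel_split => // [c /flip_at_ne //|s o e]; rewrite inner_flip_c0.
by case: s; case: o; rewrite !bool2_eqE /= ?orbF.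
Qed.

Lemma nS_add_edges rr a1 b1 a2 b2 :
  curve_rel D rr =2 add_edge (add_edge cut a1 b1) a2 b2 ->
  (nS D rr + ~~ connect (add_edge cut a1 b1) a2 b2 + ~~ connect cut a1 b1 =
   ncirc D + nclasses cut)%N.
Proof.
move=> curveE; rewrite /nS (eq_nclasses curveE).
rewrite -(nclasses_add_edge a1 b1 (cut_rel_sym D res c0)).
rewrite -(nclasses_add_edge a2 b2 (add_edge_sym a1 b1 (cut_rel_sym D res c0))).
by rewrite !addnA.
Qed.

Lemma nS_resolutions :
  (nS D res + ~~ connect (add_edge cut I1 O2) I2 O1 + ~~ connect cut I1 O2 =
   nS D res' + ~~ connect (add_edge cut I1 I2) O1 O2 + ~~ connect cut I1 I2)%N.
Proof. by rewrite (nS_add_edges curve_rel_oriented) (nS_add_edges curve_rel_disoriented). Qed.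

Lemma weight_flip (tau : {ffun dart C -> bool}) :
  (forall d, tau (mate D d) = tau d) ->
  (forall d, d.1.1 != c0 -> ~~ at_vertex D res d -> tau (inner D res d) = tau d) ->
  (forall d, d.1.1 != c0 -> at_vertex D res d -> tau (inner D res d) != tau d) ->
  tau I1 != tau I2 -> tau O1 != tau O2 -> weightb D res' tau.
Proof.
move=> t_mate t_arc t_vtx tI tO; apply/weightP; split => // d.
- case: (eqVneq d.1.1 c0) => dc0.
    by rewrite /Defs.at_vertex dc0 flip_at_c0 (negbTE c0_nonvirtual).
  by rewrite at_vertex_flip_ne // inner_flip_ne //; apply: t_arc.
- case: (eqVneq d.1.1 c0) => dc0; last first.
    by rewrite at_vertex_flip_ne // inner_flip_ne //; apply: t_vtx.
  move=> _; case: d dc0 => [[c s] o] /= ->; rewrite flip_at_c0 (negbTE c0_nonvirtual).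
  by case: s; case: o; rewrite // eq_sym.
Qed.

Lemma weight_at_c0 (tau : {ffun dart C -> bool}) : weightb D res tau ->
  tau O2 = tau I1 /\ tau O1 = tau I2.
Proof.
case/weightP => _ t_arc _.
have vtx s o : ~~ at_vertex D res (c0, s, o) by rewrite /Defs.at_vertex /= res_c0 andbF.
by rewrite -(t_arc _ (vtx false false)) -(t_arc _ (vtx true false)) !inner_c0.
Qed.

Lemma weight_flip_same (tau : {ffun dart C -> bool}) : weightb D res tau ->
  tau I1 != tau I2 -> weightb D res' tau.
Proof.
move=> tau_w tI; have [tO2 tO1] := weight_at_c0 tau_w; case/weightP: tau_w => t_mate t_arc t_vtx.
by apply: weight_flip => // [d _|d _|]; [apply: t_arc | apply: t_vtx | rewrite tO1 tO2 eq_sym].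
Qed.

Section FlipAlongArc.
Variables (s o : bool).
Local Notation K := (connect cut (c0, s, o)).

Lemma cut_arc_mate d : K (mate D d) = K d.
Proof.
apply/esym/(connect_closed (sym_connect_sym (cut_rel_sym D res c0))).
by rewrite /cut_rel ext_relE eqxx.
Qed.

Lemma cut_arc_inner d : d.1.1 != c0 -> K (inner D res d) = K d.
Proof.
move=> dc0; apply/esym/(connect_closed (sym_connect_sym (cut_rel_sym D res c0))).
by rewrite /cut_rel dc0 eqxx orbT.
Qed.

Lemma weight_flip_arc (tau : {ffun dart C -> bool}) : weightb D res tau ->
  let tau' := [ffun d => tau d (+) K d] in
  tau' I1 != tau' I2 -> tau' O1 != tau' O2 -> weightb D res' tau'.
Proof.
case/weightP => t_mate t_arc t_vtx tau' tI tO; apply: weight_flip => // d; rewrite !ffunE.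
- by rewrite t_mate cut_arc_mate.
- by move=> dc0 dv; rewrite t_arc // cut_arc_inner.
- by move=> dc0 dv; rewrite cut_arc_inner //; move: (t_vtx d dv); do 2 case: (tau _); case: (K d).
Qed.

Lemma vprod_flip_arc (tau : {ffun dart C -> bool}) : vertex_even K c0 ->
  vprod D [ffun d => tau d (+) K d] = (vprod D tau * (-1) ^+ strand_at K c0)%R.
Proof.
move=> K_even0.
have K_inner c : c != c0 -> forall s' o', K (inner D res (c, s', o')) = K (c, s', o').
  by move=> cc0 s' o'; apply: cut_arc_inner.
rewrite vprod_addb //; first congr (_ * _)%R.
- congr (_ ^+ _)%R; rewrite (_ : [set c | _ & _] = if strand_at K c0 then [set c0] else set0).
    by case: strand_at; rewrite ?cards1 ?cards0.
  apply/setP => c; case: (eqVneq c c0) => [->|cc0].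
    by rewrite inE c0_nonvirtual; case: strand_at; rewrite ?inE ?eqxx.
  have -> : c \in (if strand_at K c0 then [set c0] else set0) = false.
    by case: strand_at; rewrite ?inE ?(negbTE cc0).
  rewrite inE; apply/negbTE/nandP; case: (boolP (is_virtual _)) => nvc; [by left | right].
  exact: inner_invariant_not_strand_at nvc (K_inner c cc0).
- exact: cut_arc_mate.
- move=> c; case: (eqVneq c c0) => [->|cc0] //.
  exact: inner_invariant_vertex_even (K_inner c cc0).
- move=> c s' vc; have cc0 : c != c0 by apply: contraNneq c0_nonvirtual => <-.
  by rewrite -(K_inner c cc0 s' false) /Defs.inner vc.
Qed.

End FlipAlongArc.

Lemma flip_oriented_pairing :
  exit_pairing (false, false) = (true, true) -> exit_pairing (true, false) = (false, true) ->
  (nS D res').+1 = nS D res /\ ipar D res' = ipar D res.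
Proof.
move=> e1 e2.
have e3 : exit_pairing (false, true) = (true, false) by rewrite -e2 exit_pairingK.
have e4 : exit_pairing (true, true) = (false, false) by rewrite -e1 exit_pairingK.
split.
  have := nS_resolutions; rewrite !(connect_add_edge _ _ (cut_rel_sym D res c0)).
  rewrite !connect_cut_c0 e1 e2 e3 e4 /=; lia.
have [tau tau_w] := weight_exists D res; have [tO2 tO1] := weight_at_c0 tau_w.
rewrite (ipar_weight planarD tau_w).
have [tI|tI] := eqVneq (tau I1) (tau I2); last first.
  by rewrite (ipar_weight planarD (weight_flip_same tau_w tI)).
have K_even : vertex_even (connect cut I2) c0.
  by rewrite /vertex_even !connect_cut_c0 e2 !bool2_eqE.
have tau'_w : weightb D res' [ffun d => tau d (+) connect cut I2 d].
  by apply: weight_flip_arc => //; rewrite !ffunE !connect_cut_c0 e2 !bool2_eqE /= ?tO1 ?tO2 tI;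
    case: (tau I2).
rewrite (ipar_weight planarD tau'_w) vprod_flip_arc // /strand_at !connect_cut_c0 e2.
by rewrite !bool2_eqE /= expr0 mulr1.
Qed.

Lemma flip_disoriented_pairing :
  exit_pairing (false, false) = (true, false) -> exit_pairing (false, true) = (true, true) ->
  nS D res' = (nS D res).+1 /\ ipar D res' = ipar D res.
Proof.
move=> e1 e2.
have e3 : exit_pairing (true, true) = (false, true) by rewrite -e2 exit_pairingK.
have e4 : exit_pairing (true, false) = (false, false) by rewrite -e1 exit_pairingK.
split.
  have := nS_resolutions; rewrite !(connect_add_edge _ _ (cut_rel_sym D res c0)).
  rewrite !connect_cut_c0 e1 e2 e3 e4 /=; lia.
have [tau tau_w] := weight_exists D res; rewrite (ipar_weight planarD tau_w).
have := weight_out_exit c0 I1 tau_w; rewrite exit_dart_c0 e1 /= !addbF => tI.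
by rewrite (ipar_weight planarD (weight_flip_same tau_w _)) // tI; case: (tau I1).
Qed.

Lemma flip_straight_pairing :
  exit_pairing (false, false) = (false, true) -> exit_pairing (true, false) = (true, true) ->
  nS D res' = nS D res /\ ipar D res' = (- ipar D res)%R.
Proof.
move=> e1 e2.
have e3 : exit_pairing (true, true) = (true, false) by rewrite -e2 exit_pairingK.
have e4 : exit_pairing (false, true) = (false, false) by rewrite -e1 exit_pairingK.
split.
  have := nS_resolutions; rewrite !(connect_add_edge _ _ (cut_rel_sym D res c0)).
  rewrite !connect_cut_c0 e1 e2 e3 e4 /=; lia.
have [tau tau_w] := weight_exists D res; have [tO2 tO1] := weight_at_c0 tau_w.
rewrite (ipar_weight planarD tau_w).
have := weight_out_exit c0 I1 tau_w; rewrite exit_dart_c0 e1 /= addbF addbT tO1.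
move=> /(congr1 negb); rewrite !negbK => tI.
have K_even : vertex_even (connect cut I1) c0.
  by rewrite /vertex_even !connect_cut_c0 e1 !bool2_eqE.
have tau'_w : weightb D res' [ffun d => tau d (+) connect cut I1 d].
  by apply: weight_flip_arc => //; rewrite !ffunE !connect_cut_c0 e1 !bool2_eqE /= ?tO1 ?tO2 tI;
    case: (tau I1).
rewrite (ipar_weight planarD tau'_w) vprod_flip_arc // /strand_at !connect_cut_c0 e1.
by rewrite !bool2_eqE /= expr1 mulrN1.
Qed.

End ChangeOfResolution.

Lemma eqz_mod4 (x y k : int) : x = (y + 4 * k)%R -> (x = y %[mod 4])%Z.
Proof. by move=> ->; rewrite addrC mulrC modzMDl. Qed.

Section MaxDegree.
Variables (C : finType) (D : diagram C) (res : C -> bool) (c0 : C).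
Hypotheses (c0_nonvirtual : ~~ is_virtual (kind D c0)) (res_c0 : res c0).
Local Notation res' := (flip_at res c0).

Lemma card_flip_oriented (P : pred C) :
  #|[set c | P c && res c]| = (#|[set c | P c && res' c]| + P c0)%N.
Proof.
rewrite (cardsD1 c0) inE res_c0 andbT addnC; congr (_ + _)%N.
apply: eq_card => c; rewrite !inE; case: (eqVneq c c0) => [->|cc0] /=.
  by rewrite flip_at_c0 // andbF.
by rewrite flip_at_ne.
Qed.

Lemma card_flip_disoriented (P : pred C) :
  #|[set c | P c && ~~ res' c]| = (#|[set c | P c && ~~ res c]| + P c0)%N.
Proof.
rewrite (cardsD1 c0) inE flip_at_c0 // andbT addnC; congr (_ + _)%N.
apply: eq_card => c; rewrite !inE; case: (eqVneq c c0) => [->|cc0] /=.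
  by rewrite res_c0 andbF.
by rewrite flip_at_ne.
Qed.

Local Open Scope ring_scope.

(* The change is [2 (||S'|| - ||S||) - 2] at a positive crossing, and *)
(* [2 (||S'|| - ||S||) + 2] at a negative or singular one.            *)
Lemma maxA_flip :
  (maxA D res' = maxA D res + 2 * ((nS D res')%:Z - (nS D res)%:Z) + 2 %[mod 4])%Z.
Proof.
rewrite /maxA /a_S /b_S /alpha_S /beta_S.
rewrite (card_flip_oriented (fun c => is_neg (kind D c))).
rewrite (card_flip_oriented (fun c => is_pos (kind D c))).
rewrite (card_flip_disoriented (fun c => is_neg (kind D c))).
rewrite (card_flip_disoriented (fun c => is_pos (kind D c))).
rewrite (card_flip_oriented (fun c => is_singular (kind D c))).
rewrite (card_flip_disoriented (fun c => is_singular (kind D c))).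
move: c0_nonvirtual; case: (kind D c0) => [[]||] //= _.
- by apply: (@eqz_mod4 _ _ (-1)); lia.
- by apply: (@eqz_mod4 _ _ 0); lia.
- by apply: (@eqz_mod4 _ _ 0); lia.
Qed.

End MaxDegree.

Section ResolutionChange.
Variables (C : finType) (D : diagram C).
Local Open Scope ring_scope.

Definition resolution_change (A B : C -> bool) : Prop :=
  (nS D A <> nS D B -> ipar D A = ipar D B /\ (maxA D A = maxA D B %[mod 4])%Z) /\
  (nS D A = nS D B -> ipar D A = - ipar D B /\ (maxA D A = maxA D B + 2 %[mod 4])%Z).

Lemma resolution_change_sym A B : resolution_change A B -> resolution_change B A.
Proof.
case=> [ne eq]; split=> nS_AB.
  by have [ipAB mAB] := ne (nesym nS_AB); split; apply: esym.
have [ipAB mAB] := eq (esym nS_AB); split; first by rewrite ipAB opprK.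
move/eqP: mAB; rewrite eqz_mod_dvd => /dvdzP [k mAB]; apply: (@eqz_mod4 _ _ (- k - 1)); lia.
Qed.

Lemma resolution_change_flip_oriented (res : C -> bool) (c0 : C) :
  planar D -> ~~ is_virtual (kind D c0) -> res c0 -> resolution_change (flip_at res c0) res.
Proof.
move=> planarD c0_nonvirtual res_c0; have mA := maxA_flip c0_nonvirtual res_c0.
case: (exit_pairing_cases D res c0) => [[e1 e2]|[e1 e2]|[e1 e2]].
- have [nSE iparE] := flip_oriented_pairing planarD c0_nonvirtual res_c0 e1 e2.
  split=> [_|]; last lia.
  by split=> //; rewrite mA -nSE; apply: (@eqz_mod4 _ _ 0); lia.
- have [nSE iparE] := flip_disoriented_pairing planarD c0_nonvirtual res_c0 e1 e2.
  split=> [_|]; last lia.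
  by split=> //; rewrite mA nSE; apply: (@eqz_mod4 _ _ 1); lia.
- have [nSE iparE] := flip_straight_pairing planarD c0_nonvirtual res_c0 e1 e2.
  by split=> // _; split=> //; rewrite mA nSE; apply: (@eqz_mod4 _ _ 0); lia.
Qed.

End ResolutionChange.

Lemma flip_atK (C : finType) (res : C -> bool) (c0 : C) : flip_at (flip_at res c0) c0 = res.
Proof.
by apply: functional_extensionality => c; rewrite /flip_at; case: (c == c0); rewrite ?negbK.
Qed.

Theorem lemma4p3 (C : finType) (D : diagram C) (res : C -> bool) (c0 : C) :
  planar D -> ~~ is_virtual (kind D c0) ->
  (nS D (flip_at res c0) <> nS D res ->
     ipar D (flip_at res c0) = ipar D res /\
     (maxA D (flip_at res c0) = maxA D res %[mod 4])%Z) /\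
  (nS D (flip_at res c0) = nS D res ->
     ipar D (flip_at res c0) = (- ipar D res)%R /\
     (maxA D (flip_at res c0) = maxA D res + 2 %[mod 4])%Z).
Proof.
move=> planarD c0_nonvirtual; case: (boolP (res c0)) => res_c0.
  exact: resolution_change_flip_oriented.
apply: resolution_change_sym; rewrite -{1}(flip_atK res c0).
by apply: resolution_change_flip_oriented; rewrite // /flip_at eqxx.
Qed.
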